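(* Let $S$ be a pogroup and $B$ a poset. If $f:X\to B$ is a monotone map which is topological as a functor (posets regarded as categories), then $f$, regarded as an $S$-poset map with trivial action on both $X$ and $B$, is a regular injective object of $\mathbf{Pos}\text{-}S/B$.
   Context: A pogroup is a group with a partial order compatible with multiplication (a pomonoid that is a group). $\mathbf{Pos}\text{-}S$ is the category of right $S$-posets and action-preserving monotone maps; $\mathbf{Pos}\text{-}S/B$ its slice over $B$; trivial action means $as=a$ for all $a,s$. Regular injective means injective with respect to order-embeddings. A poset is a category with an arrow $a\to a'$ iff $a\le a'$. For a functor $G:\mathcal A\to\mathcal X$, a source $(f_i:A\to A_i)_{i\in I}$ is $G$-initial if for every source $(g_i:C\to A_i)$ and $\mathcal X$-morphism $h:GC\to GA$ with $Gg_i=Gf_i h$ for all $i$ there is a unique $\bar h:C\to A$ with $G\bar h=h$ and $g_i=f_i\bar h$; $G$ is topological if every $G$-structured source $(X\to GA_i)_{i\in I}$ has a unique $G$-initial lift (a source $(A\to A_i)$ with $GA=X$ mapped by $G$ to the given source). *)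

Set Implicit Arguments.
Unset Strict Implicit.

Record poset := Poset {
  pcar :> Type;
  ple : pcar -> pcar -> Prop;
  ple_refl : forall x, ple x x;
  ple_trans : forall x y z, ple x y -> ple y z -> ple x z;
  ple_antisym : forall x y, ple x y -> ple y x -> x = y }.
Arguments ple {p}.

Definition monotone (P Q : poset) (f : P -> Q) : Prop :=
  forall x y, ple x y -> ple (f x) (f y).

Record pogroup := Pogroup {
  gpo :> poset;
  gmul : gpo -> gpo -> gpo;
  gone : gpo;
  ginv : gpo -> gpo;
  gmulA : forall x y z, gmul x (gmul y z) = gmul (gmul x y) z;
  gmul1l : forall x, gmul gone x = x;
  gmul1r : forall x, gmul x gone = x;
  gmulVl : forall x, gmul (ginv x) x = gone;
  gmulVr : forall x, gmul x (ginv x) = gone;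
  gle_mull : forall x y z, ple x y -> ple (gmul z x) (gmul z y);
  gle_mulr : forall x y z, ple x y -> ple (gmul x z) (gmul y z) }.

Record sposet (S : pogroup) := SPoset {
  spo :> poset;
  act : spo -> S -> spo;
  act_one : forall a, act a (gone S) = a;
  act_mul : forall a s t, act (act a s) t = act a (gmul s t);
  act_mono_l : forall a b s, ple a b -> ple (act a s) (act b s);
  act_mono_r : forall a s t, ple s t -> ple (act a s) (act a t) }.
Arguments act {S s0} _ _.

Definition spos_map (S : pogroup) (A C : sposet S) (h : A -> C) : Prop :=
  monotone h /\ forall a s, h (act a s) = act (h a) s.

Record slice_obj (S : pogroup) (B : sposet S) := SliceObj {
  sdom : sposet S;
  sstr : sdom -> B;
  sstr_map : spos_map sstr }.
Arguments sdom {S B}.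
Arguments sstr {S B} _ _.

Definition slice_map (S : pogroup) (B : sposet S) (A C : slice_obj B)
  (h : sdom A -> sdom C) : Prop :=
  spos_map h /\ forall a, sstr C (h a) = sstr A a.

Definition order_embedding (P Q : poset) (m : P -> Q) : Prop :=
  forall x y, ple (m x) (m y) <-> ple x y.

(** Regular injectivity: injectivity with respect to (slice) morphisms
    that are order-embeddings. *)
Definition regular_injective (S : pogroup) (B : sposet S) (E : slice_obj B) : Prop :=
  forall (A A' : slice_obj B) (m : sdom A -> sdom A') (h : sdom A -> sdom E),
    slice_map m -> order_embedding m -> slice_map h ->
    exists k : sdom A' -> sdom E, slice_map k /\ forall a, k (m a) = h a.

Definition trivial_sposet (S : pogroup) (P : poset) : sposet S.
Proof.
  refine (@SPoset S P (fun a _ => a) _ _ _ _); intros; auto using ple_refl.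
Defined.

Lemma trivial_spos_map (S : pogroup) (X B : poset) (f : X -> B) :
  monotone f -> @spos_map S (trivial_sposet S X) (trivial_sposet S B) f.
Proof. intros Hf; split; [exact Hf | reflexivity]. Qed.

Definition trivial_slice_obj (S : pogroup) (X B : poset) (f : X -> B)
  (Hf : monotone f) : slice_obj (trivial_sposet S B) :=
  @SliceObj S (trivial_sposet S B) (trivial_sposet S X) f (trivial_spos_map S Hf).

(** A G-structured source is an object b of B with arrows b -> f (x i),
    i.e. b <= f (x i); a lift is an x with f x = b and x <= x i for all i
    (the arrows being unique). *)
Definition G_initial (X B : poset) (f : X -> B) (I : Type) (xs : I -> X) (x : X) : Prop :=
  (forall i, ple x (xs i)) /\
  forall c : X, (forall i, ple c (xs i)) -> ple (f c) (f x) -> ple c x.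

Definition topological (X B : poset) (f : X -> B) : Prop :=
  forall (b : B) (I : Type) (xs : I -> X),
    (forall i, ple b (f (xs i))) ->
    exists x, (f x = b /\ G_initial f xs x) /\
      forall x', f x' = b /\ G_initial f xs x' -> x' = x.

From Stdlib Require Import ClassicalEpsilon.

Set Implicit Arguments.
Unset Strict Implicit.

(* Since the actions are trivial, an extension of h : A -> X along an
   embedding m : A -> A' over B must send a' to an element of the fibre over
   p a' lying below every h a with a' <= m a; topologicity of f provides the
   largest such element, the initial lift of this source.  Maximality gives
   monotonicity, and because S is a group the source of a' s has the same
   lower bounds as that of a', so the extension is equivariant. *)

Section InitialLift.

Variables (X B : poset) (f : X -> B).
Hypothesis f_top : topological f.

(* [L] plays the role of the set of lower bounds of a source. *)
Definition initial_lift (L : X -> Prop) (b : B) (x : X) : Prop :=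
  f x = b /\ L x /\ forall c, L c -> ple (f c) b -> ple c x.

Lemma initial_lift_le (L1 L2 : X -> Prop) (b1 b2 : B) (x1 x2 : X) :
  (forall c, L1 c -> L2 c) -> ple b1 b2 ->
  initial_lift L1 b1 x1 -> initial_lift L2 b2 x2 -> ple x1 x2.
Proof.
  intros HL Hb [E1 [L1x1 _]] [_ [_ Max2]].
  apply Max2; [now apply HL | now rewrite E1].
Qed.

Lemma initial_lift_unique (L1 L2 : X -> Prop) (b : B) (x1 x2 : X) :
  (forall c, L1 c <-> L2 c) ->
  initial_lift L1 b x1 -> initial_lift L2 b x2 -> x1 = x2.
Proof.
  intros HL H1 H2; apply ple_antisym.
  - refine (initial_lift_le _ (ple_refl b) H1 H2); intro c; apply HL.
  - refine (initial_lift_le _ (ple_refl b) H2 H1); intro c; apply HL.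
Qed.

Lemma topological_initial_lift (I : Type) (Q : I -> Prop) (xs : I -> X) (b : B) :
  (forall i, Q i -> ple b (f (xs i))) ->
  exists x, initial_lift (fun c => forall i, Q i -> ple c (xs i)) b x.
Proof.
  intros Hb.
  destruct (@f_top b {i | Q i} (fun i => xs (proj1_sig i)))
    as [x [[Efx [Low Max]] _]].
  { intros [i Qi]; exact (Hb i Qi). }
  exists x; split; [exact Efx | split].
  - intros i Qi; exact (Low (exist _ i Qi)).
  - intros c Lc Hc; apply Max; [intros [i Qi]; exact (Lc i Qi) | now rewrite Efx].
Qed.

End InitialLift.

Lemma act_actV (S : pogroup) (P : sposet S) (a : P) (s : S) :
  act (act a s) (ginv s) = a.
Proof. now rewrite act_mul, gmulVr, act_one. Qed.

Lemma act_le_actV (S : pogroup) (P : sposet S) (a b : P) (s : S) :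
  ple (act a s) b -> ple a (act b (ginv s)).
Proof. intros H; rewrite <- (act_actV a s); now apply act_mono_l. Qed.

Section Extension.

Variables (S : pogroup) (X B : poset) (f : X -> B).
Hypothesis f_top : topological f.

Variables (A A' : slice_obj (trivial_sposet S B)) (m : sdom A -> sdom A') (h : sdom A -> X).
Hypothesis m_emb : order_embedding m.
Hypothesis m_act : forall a s, m (act a s) = act (m a) s.
Hypothesis m_str : forall a, sstr A' (m a) = sstr A a.
Hypothesis h_mono : forall a1 a2, ple a1 a2 -> ple (h a1) (h a2).
Hypothesis h_act : forall a s, h (act a s) = h a.
Hypothesis h_str : forall a, f (h a) = sstr A a.

Let p := sstr A'.

Lemma p_mono (a1 a2 : sdom A') : ple a1 a2 -> ple (p a1) (p a2).
Proof. apply (proj1 (sstr_map A')). Qed.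

Lemma p_act (a' : sdom A') (s : S) : p (act a' s) = p a'.
Proof. apply (proj2 (sstr_map A')). Qed.

Definition below_source (a' : sdom A') (c : X) : Prop :=
  forall a, ple a' (m a) -> ple c (h a).

Lemma below_source_antitone (a1 a2 : sdom A') (c : X) :
  ple a1 a2 -> below_source a1 c -> below_source a2 c.
Proof. intros H12 Hc a Ha; apply Hc; eapply ple_trans; eauto. Qed.

Lemma below_source_act (a' : sdom A') (s : S) (c : X) :
  below_source (act a' s) c <-> below_source a' c.
Proof.
  split; intros Hc a Ha.
  - rewrite <- (h_act a s); apply Hc.
    rewrite m_act; now apply act_mono_l.
  - rewrite <- (h_act a (ginv s)); apply Hc.
    rewrite m_act; now apply act_le_actV.
Qed.

Lemma extension_exists (a' : sdom A') :
  exists x, initial_lift f (below_source a') (p a') x.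
Proof.
  apply (topological_initial_lift f_top (Q := fun a => ple a' (m a)) (xs := h)).
  intros a Ha; rewrite h_str, <- m_str; now apply p_mono.
Qed.

Definition extension (a' : sdom A') : X :=
  proj1_sig (constructive_indefinite_description _ (extension_exists a')).

Lemma extensionP (a' : sdom A') :
  initial_lift f (below_source a') (p a') (extension a').
Proof. exact (proj2_sig (constructive_indefinite_description _ (extension_exists a'))). Qed.

Lemma extension_mono (a1 a2 : sdom A') :
  ple a1 a2 -> ple (extension a1) (extension a2).
Proof.
  intros H12.
  refine (initial_lift_le _ (p_mono H12) (extensionP a1) (extensionP a2)).
  intro c; now apply below_source_antitone.
Qed.

Lemma extension_act (a' : sdom A') (s : S) :
  extension (act a' s) = extension a'.
Proof.
  refine (initial_lift_unique _ (extensionP (act a' s)) _).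
  - intro c; apply below_source_act.
  - rewrite p_act; apply extensionP.
Qed.

Lemma extension_str (a' : sdom A') : f (extension a') = p a'.
Proof. apply extensionP. Qed.

Lemma extension_on_image (a : sdom A) : extension (m a) = h a.
Proof.
  refine (initial_lift_unique (L2 := below_source (m a)) _ (extensionP (m a)) _);
    [intro c; reflexivity |].
  split; [now rewrite h_str, m_str | split].
  - intros a0 Ha0; now apply h_mono, m_emb.
  - intros c Hc _; apply Hc, ple_refl.
Qed.

End Extension.

Theorem mainTheorem9 (S : pogroup) (X B : poset) (f : X -> B)
  (Hf : monotone f) :
  topological f ->
  regular_injective (trivial_slice_obj S Hf).
Proof.
  intros Htop A A' m h [[_ Hm_act] Hm_str] Hm_emb [[Hh_mono Hh_act] Hh_str].
  exists (extension Htop Hm_str Hh_str).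
  split; [split; [split |] |].
  - intros a1 a2; apply extension_mono.
  - intros a' s; now apply extension_act.
  - apply extension_str.
  - intro a; now apply extension_on_image.
Qed.
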